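(* For every closed term $t:\rho$ of $\mathcal T_{class}$: if for every state $s$ there exist a state $s'\geq s$ and $u\in\mathrm{Comp}_\rho$ such that $t[s'']=u[s'']$ for all states $s''\geq s'$, then $t\in\mathrm{Comp}_\rho$.
   Context: Updates: an update is a finite set of triples of natural numbers forming the graph of a partial function $\mathbb N^2\to\mathbb N$. System $\mathcal T$ is Gödel's System T (types $\mathsf N,\mathsf{Bool}$, $\sigma\to\tau$, $\sigma\times\tau$; pairs, projections $\pi_0,\pi_1$; constants $0,\mathsf S,\mathsf{True},\mathsf{False},\mathsf{if}_\tau,\mathsf{rec}_\tau$) extended with a base type $\mathsf U$ of updates, a constant $\overline U$ for each update, and primitive recursive operations $\min,\mathsf{get},\mathsf{mkupd},\cup$ on updates. Terms of $\mathcal T$ are strongly normalizing with unique normal forms; $t_1=t_2$ means same normal form; closed normal terms of type $\mathsf N,\mathsf{Bool},\mathsf U$ are numerals, booleans, update constants. $\mathcal T_{class}$ is $\mathcal T$ plus countably many constants $\Phi_0,\Phi_1,\dots:\mathsf N\to\mathsf N$ without reduction rules. A state is a closed term $s:\mathsf N\to\mathsf N\to\mathsf N$ of $\mathcal T$; $s_i:=s(i)$; $t[s]$ replaces each $\Phi_i$ in $t$ by $s_i$. Each arithmetical formula $A(\vec x,y)$ (no $\Phi_i$, quantifiers over $\mathsf N$) is associated with exactly one constant $\Phi_A$ (distinct formulas, distinct constants); $\langle\vec x\rangle$ is a term of $\mathcal T$ coding an injection $\mathbb N^k\to\mathbb N$, bijective on numerals. $\Gamma$ is a fixed arbitrary finite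 set of arithmetical formulas. $\mathrm{dm}(s)$ is the set of pairs $(i,\langle\vec n\rangle)$ such that $\Phi_i=\Phi_A$ and (if $A\in\Gamma$ then $\exists y\,A(\vec n,y)\to A(\vec n,s_i\langle\vec n\rangle)$ is true). $s'\geq s$ iff for all $(i,\langle\vec n\rangle)\in\mathrm{dm}(s)$, $s_i\langle\vec n\rangle=s'_i\langle\vec n\rangle$. For a term $t$ of $\mathcal T_{class}$ of atomic type, $t$ is defined in $s$ if $t[s']=t[s]$ for all states $s'\geq s$. Computable terms: for $\tau\in\{\mathsf N,\mathsf{Bool},\mathsf U\}$, $\mathrm{Comp}_\tau$ is the set of closed $t:\tau$ of $\mathcal T_{class}$ such that for every state $s$ there is a state $s'\geq s$ with $t$ defined in $s'$; $\mathrm{Comp}_{\tau\to\sigma}=\{t: tu\in\mathrm{Comp}_\sigma \text{ for all } u\in\mathrm{Comp}_\tau\}$; $\mathrm{Comp}_{\tau\times\sigma}=\{t:\pi_0t\in\mathrm{Comp}_\tau,\ \pi_1t\in\mathrm{Comp}_\sigma\}$. *)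

From mathcomp Require Import all_boot.
From mathcomp Require Import finmap.

Set Implicit Arguments.
Unset Strict Implicit.
Unset Printing Implicit Defensive.

Local Open Scope fmap_scope.

Definition upd := {fmap (nat * nat) -> nat}.

Inductive ty : Type :=
| TN | TB | TU
| Arr (A B : ty)
| Prod (A B : ty).

Inductive aty : Type := aN | aB | aU.

Definition aty_ty (a : aty) : ty :=
  match a with aN => TN | aB => TB | aU => TU end.

Definition aval (a : aty) : Type :=
  match a with aN => nat | aB => bool | aU => upd end.

Fixpoint fun_ty (args : seq aty) (res : aty) : Type :=
  match args with
  | [::] => aval res
  | a :: r => aval a -> fun_ty r res
  end.

Fixpoint fun_tyT (args : seq aty) (res : aty) : ty :=
  match args with
  | [::] => aty_ty res
  | a :: r => Arr (aty_ty a) (fun_tyT r res)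
  end.

(** The four primitive recursive operations on updates. *)
Inductive uop : Type := Omin | Oget | Omkupd | Ounion.

(** Their signatures and interpretations are not fixed by the text; they are
    parameters of the development. Also the coding <x> of
    tuples, the assignment A |-> Phi_A and the finite set Gamma. *)

Inductive aterm : Type :=
| AVar (n : nat) | AZero | ASucc (t : aterm)
| APlus (t u : aterm) | AMult (t u : aterm).

Inductive aform : Type :=
| AEq (t u : aterm)
| AFalse
| ANot (A : aform)
| AAnd (A B : aform)
| AOr (A B : aform)
| AImp (A B : aform)
| AAll (A : aform)
| AEx (A : aform).

Fixpoint aeval (e : nat -> nat) (t : aterm) : nat :=
  match t with
  | AVar n => e n
  | AZero => 0
  | ASucc t => (aeval e t).+1
  | APlus t u => aeval e t + aeval e u
  | AMult t u => aeval e t * aeval e u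
  end.

Definition scons (m : nat) (e : nat -> nat) : nat -> nat :=
  fun j => if j is j'.+1 then e j' else m.

Fixpoint holds (e : nat -> nat) (A : aform) : Prop :=
  match A with
  | AEq t u => aeval e t = aeval e u
  | AFalse => False
  | ANot A => ~ holds e A
  | AAnd A B => holds e A /\ holds e B
  | AOr A B => holds e A \/ holds e B
  | AImp A B => holds e A -> holds e B
  | AAll A => forall m, holds (scons m e) A
  | AEx A => exists m, holds (scons m e) A
  end.

Fixpoint fvb_t (n : nat) (t : aterm) : bool :=
  match t with
  | AVar j => j < n
  | AZero => true
  | ASucc t => fvb_t n t
  | APlus t u | AMult t u => fvb_t n t && fvb_t n u
  end.

Fixpoint fvb (n : nat) (A : aform) : bool :=
  match A with
  | AEq t u => fvb_t n t && fvb_t n u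
  | AFalse => true
  | ANot A => fvb n A
  | AAnd A B | AOr A B | AImp A B => fvb n A && fvb n B
  | AAll A | AEx A => fvb n.+1 A
  end.

(** An arithmetical formula A(x_1..x_k, y) is a pair (k, A) where the free
    variables of A are among 0..k: variable j < k is x_(j+1), variable k is y. *)
Definition arith_formula (k : nat) (A : aform) : bool := fvb k.+1 A.

Definition holds_at (A : aform) (ns : seq nat) (m : nat) : Prop :=
  holds (fun j => nth 0 (rcons ns m) j) A.

Fixpoint In_seq {T : Type} (x : T) (l : seq T) : Prop :=
  match l with [::] => False | y :: r => y = x \/ In_seq x r end.

Record Param : Type := {
  op_args : uop -> seq aty;
  op_res : uop -> aty;
  op_sem : forall o : uop, fun_ty (op_args o) (op_res o);
  phiA : nat -> aform -> nat;          (* index i with Phi_i = Phi_A *)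
  code : seq nat -> nat;               (* value of <n_1,...,n_k> *)
  Gamma : seq (nat * aform)
}.

(** * Terms of T_class (terms of T are the Phi-free ones) *)
Inductive tm : Type :=
| Var (n : nat)
| Lam (A : ty) (b : tm)
| App (t u : tm)
| Pair (t u : tm)
| P0 (t : tm)
| P1 (t : tm)
| Zero
| Succ
| Tt
| Ff
| If (A : ty)
| Rec (A : ty)
| Upd (u : upd)
| Op (o : uop)
| Phi (i : nat).

Definition num (n : nat) : tm := iter n (App Succ) Zero.

Definition vterm (a : aty) : aval a -> tm :=
  match a return aval a -> tm with
  | aN => fun n => num n
  | aB => fun b => if b then Tt else Ff
  | aU => fun u => Upd u
  end.

Section Calculus.
Variable P : Param.

Inductive has_ty : seq ty -> tm -> ty -> Prop :=
| T_var G n A : onth G n = Some A -> has_ty G (Var n) A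
| T_lam G A b B : has_ty (A :: G) b B -> has_ty G (Lam A b) (Arr A B)
| T_app G t u A B : has_ty G t (Arr A B) -> has_ty G u A -> has_ty G (App t u) B
| T_pair G t u A B : has_ty G t A -> has_ty G u B -> has_ty G (Pair t u) (Prod A B)
| T_p0 G t A B : has_ty G t (Prod A B) -> has_ty G (P0 t) A
| T_p1 G t A B : has_ty G t (Prod A B) -> has_ty G (P1 t) B
| T_zero G : has_ty G Zero TN
| T_succ G : has_ty G Succ (Arr TN TN)
| T_tt G : has_ty G Tt TB
| T_ff G : has_ty G Ff TB
| T_if G A : has_ty G (If A) (Arr TB (Arr A (Arr A A)))
| T_rec G A : has_ty G (Rec A) (Arr A (Arr (Arr TN (Arr A A)) (Arr TN A)))
| T_upd G u : has_ty G (Upd u) TU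
| T_op G o : has_ty G (Op o) (fun_tyT (op_args P o) (op_res P o))
| T_phi G i : has_ty G (Phi i) (Arr TN TN).

Definition closed_of (t : tm) (A : ty) : Prop := has_ty [::] t A.

Fixpoint lift (c : nat) (t : tm) : tm :=
  match t with
  | Var n => if n < c then Var n else Var n.+1
  | Lam A b => Lam A (lift c.+1 b)
  | App t u => App (lift c t) (lift c u)
  | Pair t u => Pair (lift c t) (lift c u)
  | P0 t => P0 (lift c t)
  | P1 t => P1 (lift c t)
  | t => t
  end.

Fixpoint subst (k : nat) (u : tm) (t : tm) : tm :=
  match t with
  | Var n => if n < k then Var n else if n == k then u else Var n.-1
  | Lam A b => Lam A (subst k.+1 (lift 0 u) b)
  | App a b => App (subst k u a) (subst k u b)
  | Pair a b => Pair (subst k u a) (subst k u b)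
  | P0 a => P0 (subst k u a)
  | P1 a => P1 (subst k u a)
  | t => t
  end.

(** delta-rules for the update operations: an operation applied to closed
    normal values reduces to the value of its interpretation. *)
Inductive opred : forall (args : seq aty) (res : aty),
    fun_ty args res -> tm -> tm -> tm -> Prop :=
| opred_nil res (v : aval res) h : @opred [::] res v h h (@vterm res v)
| opred_cons a args res (f : fun_ty (a :: args) res) h (x : aval a) lhs rhs :
    @opred args res (f x) (App h (@vterm a x)) lhs rhs ->
    @opred (a :: args) res f h lhs rhs.

Inductive step : tm -> tm -> Prop :=
| st_beta A b u : step (App (Lam A b) u) (subst 0 u b)
| st_p0 t u : step (P0 (Pair t u)) t
| st_p1 t u : step (P1 (Pair t u)) u
| st_if_t A a b : step (App (App (App (If A) Tt) a) b) a
| st_if_f A a b : step (App (App (App (If A) Ff) a) b) b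
| st_rec_0 A a f : step (App (App (App (Rec A) a) f) Zero) a
| st_rec_S A a f n :
    step (App (App (App (Rec A) a) f) (App Succ n))
         (App (App f n) (App (App (App (Rec A) a) f) n))
| st_op o lhs rhs :
    opred (op_sem P o) (Op o) lhs rhs -> step lhs rhs
| st_appl t t' u : step t t' -> step (App t u) (App t' u)
| st_appr t u u' : step u u' -> step (App t u) (App t u')
| st_lam A b b' : step b b' -> step (Lam A b) (Lam A b')
| st_pairl t t' u : step t t' -> step (Pair t u) (Pair t' u)
| st_pairr t u u' : step u u' -> step (Pair t u) (Pair t u')
| st_p0c t t' : step t t' -> step (P0 t) (P0 t')
| st_p1c t t' : step t t' -> step (P1 t) (P1 t').

(** t1 = t2 ("same normal form"): convertibility, i.e. the equivalence closure
    of reduction; by strong normalization and uniqueness of normal forms this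
    is the same as having the same normal form. *)
Inductive conv : tm -> tm -> Prop :=
| conv_step t u : step t u -> conv t u
| conv_refl t : conv t t
| conv_sym t u : conv t u -> conv u t
| conv_trans t u v : conv t u -> conv u v -> conv t v.

Fixpoint phi_free (t : tm) : bool :=
  match t with
  | Phi _ => false
  | Lam _ b => phi_free b
  | App a b | Pair a b => phi_free a && phi_free b
  | P0 a | P1 a => phi_free a
  | _ => true
  end.

Definition state (s : tm) : Prop :=
  closed_of s (Arr TN (Arr TN TN)) /\ phi_free s.

Fixpoint ssubst (s : tm) (t : tm) : tm :=
  match t with
  | Phi i => App s (num i)
  | Lam A b => Lam A (ssubst s b)
  | App a b => App (ssubst s a) (ssubst s b)
  | Pair a b => Pair (ssubst s a) (ssubst s b)
  | P0 a => P0 (ssubst s a)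
  | P1 a => P1 (ssubst s a)
  | t => t
  end.

Definition sapp (s : tm) (i c : nat) : tm := App (App s (num i)) (num c).

Definition in_dm (s : tm) (i c : nat) : Prop :=
  exists (k : nat) (A : aform) (ns : seq nat),
    [/\ arith_formula k A, phiA P k A = i, size ns = k, c = code P ns &
     (In_seq (k, A) (Gamma P) ->
        (exists y, holds_at A ns y) ->
        exists m, conv (sapp s i c) (num m) /\ holds_at A ns m)].

Definition st_ge (s' s : tm) : Prop :=
  forall i c, in_dm s i c -> conv (sapp s i c) (sapp s' i c).

Definition defined_in (t s : tm) : Prop :=
  forall s', state s' -> st_ge s' s -> conv (ssubst s' t) (ssubst s t).

Fixpoint Comp (A : ty) (t : tm) : Prop :=
  closed_of t A /\
  match A with
  | TN | TB | TU =>
      forall s, state s -> exists s', [/\ state s', st_ge s' s & defined_in t s']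
  | Arr B C => forall u, Comp B u -> Comp C (App t u)
  | Prod B C => Comp B (P0 t) /\ Comp C (P1 t)
  end.

End Calculus.

Definition phiA_injective (P : Param) : Prop :=
  forall k A k' A', arith_formula k A -> arith_formula k' A' ->
    phiA P k A = phiA P k' A' -> k = k' /\ A = A'.

Definition code_injective (P : Param) : Prop :=
  forall ns ms : seq nat, size ns = size ms -> code P ns = code P ms -> ns = ms.

From mathcomp Require Import all_boot.
From mathcomp Require Import finmap.

Set Implicit Arguments.
Unset Strict Implicit.
Unset Printing Implicit Defensive.

(* By induction on the type: at an atomic type, if t agrees with a convergent
   u from s' on, then any s1 >= s' at which u is defined is one at which t is
   defined, since t[s2] = u[s2] = u[s1] = t[s1] for all s2 >= s1.  At an arrow
   or product type the hypothesis is inherited by t v and by the projections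
   of t, because substituting a state commutes with application and
   projection and convertibility is a congruence. *)

Section Approximation.
Variable P : Param.

Lemma conv_congr (f : tm -> tm) :
  (forall a b, step P a b -> step P (f a) (f b)) ->
  forall a b, conv P a b -> conv P (f a) (f b).
Proof.
move=> fstep a b; elim=> {a b} [a b ab|a|a b _|a b c _ IHab _ IHbc].
- exact/conv_step/fstep.
- exact: conv_refl.
- exact: conv_sym.
- exact: conv_trans IHab IHbc.
Qed.

Lemma st_ge_refl s : st_ge P s s.
Proof. by move=> i c _; apply: conv_refl. Qed.

Lemma in_dm_ge s' s i c : st_ge P s' s -> in_dm P s i c -> in_dm P s' i c.
Proof.
move=> ge_s's dm_s; have s_s' := ge_s's i c dm_s.
case: dm_s => k [A [ns [fA iA sz cd realizes]]].
exists k, A, ns; split=> // inG exA.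
have [m [s_m Am]] := realizes inG exA.
by exists m; split=> //; apply: conv_trans (conv_sym s_s') s_m.
Qed.

Lemma st_ge_trans s2 s1 s : st_ge P s2 s1 -> st_ge P s1 s -> st_ge P s2 s.
Proof.
move=> ge21 ge1 i c dm_s.
exact: conv_trans (ge1 i c dm_s) (ge21 i c (in_dm_ge ge1 dm_s)).
Qed.

Definition agree_above (s t u : tm) : Prop :=
  forall s', state P s' -> st_ge P s' s -> conv P (ssubst s' t) (ssubst s' u).

Definition convergent (t : tm) : Prop :=
  forall s, state P s -> exists s', [/\ state P s', st_ge P s' s & defined_in P t s'].

Definition approximable (A : ty) (t : tm) : Prop :=
  forall s, state P s ->
    exists s', [/\ state P s', st_ge P s' s &
      exists u, Comp P A u /\ agree_above s' t u].

Lemma agree_above_ge s1 s t u :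
  st_ge P s1 s -> agree_above s t u -> agree_above s1 t u.
Proof. by move=> ge1 tu s2 st2 ge21; apply: tu (st_ge_trans ge21 ge1). Qed.

Lemma defined_in_agree s t u :
  state P s -> agree_above s t u -> defined_in P u s -> defined_in P t s.
Proof.
move=> st tu def_u s' st' ge's.
apply: conv_trans (tu s' st' ge's) _.
exact: conv_trans (def_u s' st' ge's) (conv_sym (tu s st (@st_ge_refl s))).
Qed.

Lemma convergent_of_approximable t :
  (forall s, state P s -> exists s', [/\ state P s', st_ge P s' s &
     exists u, convergent u /\ agree_above s' t u]) ->
  convergent t.
Proof.
move=> appr s st; have [s' [st' ge's [u [conv_u tu]]]] := appr s st.
have [s1 [st1 ge1 def_u]] := conv_u s' st'.
exists s1; split; [exact: st1 | exact: st_ge_trans ge1 ge's |].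
exact: defined_in_agree st1 (agree_above_ge ge1 tu) def_u.
Qed.

Lemma approximable_app B C t v :
  approximable (Arr B C) t -> Comp P B v -> approximable C (App t v).
Proof.
move=> appr Cv s st; have [s' [st' ge's [u [[_ Cuv] tu]]]] := appr s st.
exists s'; split=> //; exists (App u v); split; first exact: Cuv.
move=> s2 st2 ge2; apply: (@conv_congr (App^~ (ssubst s2 v))) (tu s2 st2 ge2).
by move=> a b; apply: st_appl.
Qed.

Lemma approximable_P0 B C t : approximable (Prod B C) t -> approximable B (P0 t).
Proof.
move=> appr s st; have [s' [st' ge's [u [[_ [Cu0 _]] tu]]]] := appr s st.
exists s'; split=> //; exists (P0 u); split; first exact: Cu0.
move=> s2 st2 ge2; apply: (@conv_congr P0) (tu s2 st2 ge2).
by move=> a b; apply: st_p0c.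
Qed.

Lemma approximable_P1 B C t : approximable (Prod B C) t -> approximable C (P1 t).
Proof.
move=> appr s st; have [s' [st' ge's [u [[_ [_ Cu1]] tu]]]] := appr s st.
exists s'; split=> //; exists (P1 u); split; first exact: Cu1.
move=> s2 st2 ge2; apply: (@conv_congr P1) (tu s2 st2 ge2).
by move=> a b; apply: st_p1c.
Qed.

Lemma Comp_closed A t : Comp P A t -> closed_of P t A.
Proof. by case: A => [|||B C|B C] []. Qed.

Lemma Comp_of_approximable A t :
  closed_of P t A -> approximable A t -> Comp P A t.
Proof.
elim: A t => [||| B _ C IHC | B IHB C IHC] t ty_t appr; split=> //=.
1-3: apply: convergent_of_approximable => s /appr[s' [st' ge's [u [[_ conv_u] tu]]]].
1-3: by exists s'; split=> //; exists u.
- move=> v Cv; apply: IHC; last exact: approximable_app appr Cv.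
  exact: T_app ty_t (Comp_closed Cv).
- split; [apply: IHB (approximable_P0 appr) | apply: IHC (approximable_P1 appr)].
  + exact: T_p0 ty_t.
  + exact: T_p1 ty_t.
Qed.

End Approximation.

Theorem mainTheorem3 (P : Param) (HphiA : phiA_injective P) (Hcode : code_injective P)
  (rho : ty) (t : tm) :
  closed_of P t rho ->
  (forall s, state P s ->
     exists s', [/\ state P s', st_ge P s' s &
       exists u, Comp P rho u /\
         (forall s'', state P s'' -> st_ge P s'' s' ->
            conv P (ssubst s'' t) (ssubst s'' u))]) ->
  Comp P rho t.
Proof. exact: Comp_of_approximable. Qed.
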